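(* Let $q$ be a prime power, and let $\mu_{q+1}$ denote the group of all $(q+1)$-th roots of unity in $\mathbb{F}_{q^2}$. Pick an integer $v$ and a polynomial $D(X)\in\mathbb{F}_{q^2}[X]$ such that the function $c\mapsto c^v D(c)^{q-1}$ permutes $\mu_{q+1}$. Let $m$ be a nonnegative integer, and let $s_1,\dots,s_m$ and $t_1,\dots,t_m$ be positive integers such that for each $i$ we have $\gcd(s_i+1,q)=1$ and $(q+1)/\gcd(t_i,q+1)$ is coprime to $s_i+1$. (1) If $r$ is a positive integer such that $\gcd(r,q-1)=1$ and $r\equiv v+\sum_{i=1}^m s_it_i\pmod{q+1}$, then $X^r B(X^{q-1})$ permutes $\mathbb{F}_{q^2}$, where $B(X):=D(X)\prod_{i=1}^m \sum_{j=0}^{s_i} X^{jt_i}$. (2) If $B(X)\in\mathbb{F}_{q^2}[X]$ satisfies $D(X)=B(X)\prod_{i=1}^m\sum_{j=0}^{s_i} X^{jt_i}$, and $r$ is a positive integer such that $\gcd(r,q-1)=1$ and $r\equiv v-\sum_{i=1}^m s_it_i\pmod{q+1}$, then $X^r B(X^{q-1})$ permutes $\mathbb{F}_{q^2}$.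
   Context: A polynomial $f(X)\in\mathbb{F}_{q^2}[X]$ is said to permute $\mathbb{F}_{q^2}$ (be a permutation polynomial) if the map $c\mapsto f(c)$ is a bijection of $\mathbb{F}_{q^2}$. For a polynomial $g$ (or expression $X^vD(X)^{q-1}$, which for $c\in\mu_{q+1}$ is well defined even if $v$ is negative), ''permutes $\mu_{q+1}$'' means that $c\mapsto g(c)$ maps $\mu_{q+1}$ bijectively onto itself. *)

From HB Require Import structures.
From mathcomp Require Import all_boot all_order all_algebra all_field.
Set Implicit Arguments. Unset Strict Implicit. Unset Printing Implicit Defensive.
Import GRing.Theory Num.Theory.
Local Open Scope ring_scope.

Definition prime_power (q : nat) : Prop :=
  exists p k : nat, [/\ prime p, (0 < k)%N & q = (p ^ k)%N].

Definition mu_root {F : finFieldType} (q : nat) : {set F} :=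
  [set c : F | c ^+ q.+1 == 1].

Definition permutes_set {F : finFieldType} (A : {set F}) (g : F -> F) : Prop :=
  [/\ {in A, forall c, g c \in A},
      {in A &, injective g} &
      {in A, forall d, exists2 c, c \in A & g c = d}].

Definition is_perm_poly {F : finFieldType} (f : {poly F}) : Prop :=
  bijective (fun c : F => f.[c]).

Definition geom_poly {F : finFieldType} (s t : nat) : {poly F} :=
  \sum_(j < s.+1) 'X^(j * t).

From mathcomp Require Import all_boot all_order all_algebra all_field.
From mathcomp Require Import zify.
Import GRing.Theory.
Local Open Scope ring_scope.

(* For c in mu_{q+1} put x = c^t and g = 1 + x + ... + x^s.  Since x^q = x^-1,
   Frobenius gives x^s g^q = g, so c^(st) G(c)^(q-1) = 1 as soon as g != 0,
   where G = geom_poly s t; the two coprimality conditions make g != 0 both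
   for x = 1 (g = s + 1) and for x != 1 (g = (x^(s+1) - 1)/(x - 1)).  Hence
   on mu_{q+1} the maps c |-> c^r B(c)^(q-1) of (1) and (2) coincide with
   c |-> c^v D(c)^(q-1).  The theorem then follows from the criterion that
   X^r B(X^(q-1)) permutes F_{q^2} when gcd(r, q-1) = 1 and c |-> c^r B(c)^(q-1)
   permutes mu_{q+1}: raising to the power q - 1 maps F_{q^2}^* onto mu_{q+1}
   and turns x^r B(x^(q-1)) into that map evaluated at x^(q-1). *)

Lemma expr_coprime_eq1 {R : pzRingType} {z : R} {a b : nat} :
  coprime a b -> z ^+ a = 1 -> z ^+ b = 1 -> z = 1.
Proof.
case: a => [|a] co_ab za zb.
  by move: co_ab; rewrite /coprime gcd0n => /eqP b1; rewrite b1 expr1 in zb.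
have [u _] := Bezoutl b (ltn0Sn a); rewrite (eqP co_ab) => /dvdnP[k ek].
have : z ^+ (1 + u * b) = 1 by rewrite ek mulnC exprM za expr1n.
by rewrite exprD expr1 mulnC exprM zb expr1n mulr1.
Qed.

Lemma expr_eq1_unit {R : unitRingType} {c : R} {n : nat} :
  (0 < n)%N -> c ^+ n = 1 -> c \is a GRing.unit.
Proof. by move=> n_gt0 cn; rewrite -(unitrX_pos c n_gt0) cn unitr1. Qed.

Lemma exprz_eq_mod {R : unitRingType} {c : R} {n : nat} {a b : int} :
  c ^+ n = 1 -> (a = b %[mod n%:Z])%Z -> c ^ a = c ^ b.
Proof.
case: n => [_|n cn /eqP]; first by rewrite !modz0 => ->.
rewrite eqz_mod_dvd => /dvdzP[k ek].
rewrite -(subrK b a) ek exprzDr ?(expr_eq1_unit (ltn0Sn n) cn) //.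
by rewrite mulrC -exprz_exp -exprnP cn exp1rz mul1r.
Qed.

Lemma exprq_sum {R : comNzSemiRingType} {q : nat}
    (I : Type) (r : seq I) (P : pred I) (f : I -> R) :
  [pchar R].-nat q -> (\sum_(i <- r | P i) f i) ^+ q = \sum_(i <- r | P i) f i ^+ q.
Proof.
move=> charR_q; apply: (big_morph _ (fun x y => exprDn_pchar x y charR_q)).
by rewrite expr0n; case: q charR_q.
Qed.

Lemma natr_coprime_neq0 {R : nzSemiRingType} {q : nat} (n : nat) :
  (1 < q)%N -> [pchar R].-nat q -> coprime n q -> n%:R != 0 :> R.
Proof.
move=> q_gt1 charR_q; have p_char : pdiv q \in [pchar R].
  by apply: pnatPpi charR_q _; rewrite pi_pdiv.
rewrite -(dvdn_pcharf p_char); apply: contraL => p_n; apply/negP => co_nq.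
have := coprime_dvdr (pdiv_dvd q) (coprime_dvdl p_n co_nq).
by rewrite /coprime gcdnn => /eqP p1; move: (pdiv_prime q_gt1); rewrite p1.
Qed.

Lemma permutes_set_eq_in (F : finFieldType) (A : {set F}) (g h : F -> F) :
  {in A, g =1 h} -> permutes_set A g -> permutes_set A h.
Proof.
move=> eq_gh [gA g_inj g_onto]; split=> [c cA | c d cA dA | d dA].
- by rewrite -eq_gh ?gA.
- by rewrite -!eq_gh //; apply: g_inj.
- by have [c cA <-] := g_onto d dA; exists c; rewrite ?eq_gh.
Qed.

Section GeomPolyOnRootsOfUnity.

Variables (F : finFieldType) (q : nat).
Hypotheses (q_gt1 : (1 < q)%N) (charF_q : [pchar F].-nat q).

Lemma geom_sum_frobenius (x : F) (s : nat) : x ^+ q.+1 = 1 ->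
  x ^+ s * (\sum_(j < s.+1) x ^+ j) ^+ q = \sum_(j < s.+1) x ^+ j.
Proof.
move=> xq; rewrite exprq_sum // mulr_sumr (reindex_inj rev_ord_inj) /=.
apply: eq_bigr => j _; rewrite subSS.
have js : (j <= s)%N by rewrite -ltnS.
by rewrite -{1}(subnKC js) exprD -mulrA -exprS -exprM mulnC exprM xq expr1n mulr1.
Qed.

Lemma geom_sum_neq0 {x : F} {s d : nat} :
  coprime s.+1 q -> coprime d s.+1 -> x ^+ d = 1 -> \sum_(j < s.+1) x ^+ j != 0.
Proof.
move=> co_sq co_ds xd; have [-> | x_neq1] := eqVneq x 1.
  rewrite (eq_bigr (fun=> 1)) => [|j _]; last exact: expr1n.
  by rewrite sumr_const card_ord (natr_coprime_neq0 _ q_gt1).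
apply: contra x_neq1 => /eqP g0; apply/eqP; apply: expr_coprime_eq1 co_ds xd _.
by apply/eqP; rewrite -subr_eq0 subrX1 g0 mulr0.
Qed.

Lemma geom_poly_mu_root (c : F) (s t : nat) :
  coprime s.+1 q -> coprime (q.+1 %/ gcdn t q.+1) s.+1 -> c ^+ q.+1 = 1 ->
  c ^+ (s * t) * (geom_poly s t).[c] ^+ (q - 1) = 1.
Proof.
move=> co_sq co_ds cq; set x := c ^+ t.
have x_root : x ^+ q.+1 = 1 by rewrite -exprM mulnC exprM cq expr1n.
have x_order : x ^+ (q.+1 %/ gcdn t q.+1) = 1.
  rewrite -exprM muln_divA ?dvdn_gcdr // -divn_mulAC ?dvdn_gcdl //.
  by rewrite mulnC exprM cq expr1n.
have -> : (geom_poly s t).[c] = \sum_(j < s.+1) x ^+ j.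
  by rewrite horner_sum; apply: eq_bigr => j _; rewrite hornerXn -exprM mulnC.
apply: (mulIf (geom_sum_neq0 co_sq co_ds x_order)).
rewrite mul1r -mulrA -exprSr subn1 prednK 1?ltnW //.
by rewrite mulnC exprM geom_sum_frobenius.
Qed.

Lemma prod_geom_poly_mu_root (I : Type) (r : seq I) (s t : I -> nat) (c : F) :
  (forall i, coprime (s i).+1 q) ->
  (forall i, coprime (q.+1 %/ gcdn (t i) q.+1) (s i).+1) ->
  c ^+ q.+1 = 1 ->
  c ^+ (\sum_(i <- r) s i * t i) *
    (\prod_(i <- r) geom_poly (s i) (t i)).[c] ^+ (q - 1) = 1.
Proof.
move=> co_s co_t cq; rewrite horner_prod -prodrXl -prodrXr -big_split /=.
by apply: big1 => i _; apply: geom_poly_mu_root.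
Qed.

End GeomPolyOnRootsOfUnity.

Section PermPolyCriterion.

Context {F : finFieldType} {q : nat}.
Hypotheses (q_gt1 : (1 < q)%N) (cardF : #|F| = (q ^ 2)%N).

Lemma expr_subn1_mu_root {x : F} : x != 0 -> x ^+ (q - 1) \in mu_root q.
Proof.
move=> x_neq0; have card_units : ((q - 1) * q.+1).+1 = #|F| by rewrite cardF; nia.
rewrite inE -exprM; apply/eqP/(mulIf x_neq0).
by rewrite mul1r -exprSr card_units expf_card.
Qed.

Context {B : {poly F}} {r : nat}.
Hypotheses (r_gt0 : (0 < r)%N) (co_r : coprime r (q - 1)).
Hypothesis B_mu : permutes_set (mu_root q) (fun c => c ^+ r * B.[c] ^+ (q - 1)).

Let XrB := 'X^r * (B \Po 'X^(q - 1)).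

Lemma hornerXrB_expr_subn1 (x : F) :
  XrB.[x] ^+ (q - 1) = (x ^+ (q - 1)) ^+ r * B.[x ^+ (q - 1)] ^+ (q - 1).
Proof.
by rewrite /XrB hornerM hornerXn horner_comp hornerXn exprMn -!exprM mulnC.
Qed.

Lemma hornerXrB_neq0 {x : F} : x != 0 -> XrB.[x] != 0.
Proof.
case: B_mu => B_mu_in _ _ x_neq0.
apply: contraTneq (B_mu_in _ (expr_subn1_mu_root x_neq0)) => /= XrB_x0.
rewrite -hornerXrB_expr_subn1 XrB_x0 expr0n subn_eq0 leqNgt q_gt1 inE expr0n /=.
by rewrite eq_sym oner_eq0.
Qed.

Lemma hornerXrB_inj (x y : F) : x != 0 -> y != 0 -> XrB.[x] = XrB.[y] -> x = y.
Proof.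
case: B_mu => _ B_mu_inj _ x_neq0 y_neq0 XrB_xy.
have exy : x ^+ (q - 1) = y ^+ (q - 1).
  by apply: B_mu_inj; rewrite ?expr_subn1_mu_root //= -!hornerXrB_expr_subn1 XrB_xy.
set z := y / x.
have zq : z ^+ (q - 1) = 1 by rewrite exprMn exprVn exy divff // expf_neq0.
have zr : z ^+ r = 1.
  apply: (mulIf (hornerXrB_neq0 x_neq0)); rewrite mul1r {2}XrB_xy.
  rewrite /XrB !hornerM !hornerXn !horner_comp !hornerXn.
  by rewrite -exy mulrA -exprMn /z divfK.
by rewrite -(divfK x_neq0 y) -/z (expr_coprime_eq1 co_r zr zq) mul1r.
Qed.

Lemma XrB_perm_poly : is_perm_poly ('X^r * (B \Po 'X^(q - 1))).
Proof.
have XrB0 : XrB.[0] = 0 by rewrite /XrB hornerM hornerXn expr0n gtn_eqF ?mul0r.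
apply: injF_bij => x y /=; rewrite -/XrB.
have [-> | x_neq0] := eqVneq x 0; have [-> | y_neq0] := eqVneq y 0 => //.
- by rewrite XrB0 => /esym/eqP; rewrite (negbTE (hornerXrB_neq0 y_neq0)).
- by rewrite XrB0 => /eqP; rewrite (negbTE (hornerXrB_neq0 x_neq0)).
exact: hornerXrB_inj.
Qed.

End PermPolyCriterion.

Theorem corollary3 (q : nat) (F : finFieldType) (v : int) (D : {poly F})
  (m : nat) (s t : 'I_m -> nat) :
  prime_power q ->
  #|F| = (q ^ 2)%N ->
  permutes_set (mu_root q) (fun c : F => c ^ v * (D.[c]) ^+ (q - 1)) ->
  (forall i, 0 < s i)%N ->
  (forall i, 0 < t i)%N ->
  (forall i, gcdn (s i).+1 q = 1%N) ->
  (forall i, coprime (q.+1 %/ gcdn (t i) q.+1) (s i).+1) ->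
  (forall r : nat, (0 < r)%N -> coprime r (q - 1) ->
     (r%:Z = v + \sum_(i < m) ((s i * t i)%N)%:Z %[mod (q.+1)%:Z])%Z ->
     is_perm_poly ('X^r * ((D * \prod_(i < m) geom_poly (s i) (t i)) \Po 'X^(q - 1))))
  /\
  (forall (B : {poly F}) (r : nat),
     D = B * \prod_(i < m) geom_poly (s i) (t i) ->
     (0 < r)%N -> coprime r (q - 1) ->
     (r%:Z = v - \sum_(i < m) ((s i * t i)%N)%:Z %[mod (q.+1)%:Z])%Z ->
     is_perm_poly ('X^r * (B \Po 'X^(q - 1)))).
Proof.
move=> [p [k [p_prime k_gt0 q_pk]]] cardF D_mu _ _ co_s co_t.
have q_gt1 : (1 < q)%N by rewrite q_pk -{1}(expn0 p) ltn_exp2l // prime_gt1.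
have charF_q : [pchar F].-nat q.
  have p_char : p \in [pchar F].
    by apply: (card_finPcharP (n := (k * 2)%N)); rewrite // cardF q_pk -expnM.
  by rewrite q_pk pnatX (pnatE _ p_prime) p_char.
rewrite -(big_morph _ PoszD (erefl 0%:Z)); set S := (\sum_(i < m) _)%N.
set P := \prod_(i < m) _.
have root_mu (c : F) : c \in mu_root q -> c ^+ q.+1 = 1 by rewrite inE => /eqP.
have P_mu : {in mu_root q, forall c : F, c ^+ S * P.[c] ^+ (q - 1) = 1}.
  by move=> c /root_mu cq; apply: prod_geom_poly_mu_root => // i; apply/eqP.
split=> [r r_gt0 co_r r_mod | B r D_BP r_gt0 co_r r_mod];
  apply: (XrB_perm_poly q_gt1 cardF r_gt0 co_r);
  apply: permutes_set_eq_in D_mu => c c_mu /=;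
  have c_unit := expr_eq1_unit (ltn0Sn q) (root_mu c c_mu).
- rewrite [c ^+ r]exprnP (exprz_eq_mod (root_mu c c_mu) r_mod) exprzDr //.
  by rewrite -exprnP hornerM exprMn mulrACA P_mu // mulr1.
- rewrite -(subrK (S%:Z) v) exprzDr // -(exprz_eq_mod (root_mu c c_mu) r_mod).
  by rewrite -!exprnP D_BP hornerM exprMn mulrACA P_mu // mulr1.
Qed.
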